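(* Let $\Theta=\tilde p/p$ be a rational inner function on $\mathbb{D}^2$, where $p(z)=a+bz_1+cz_2$ is a polynomial with a zero on $\mathbb{T}^2$. Then $|a|=|b|+|c|$.
   Context: $\mathbb{D}$ is the open unit disk, $\mathbb{T}$ the unit circle. Here $\Theta=\tilde p/p$ means the standard representation of a rational inner function: $p$ has no zeros on $\mathbb{D}^2$ (so that $\Theta$ is holomorphic on $\mathbb{D}^2$), and $\tilde p(z)=z_1z_2\overline{p(1/\bar z_1,1/\bar z_2)}$. *)

From mathcomp Require Import all_boot all_order all_algebra.
From mathcomp Require Import complex.
Set Implicit Arguments. Unset Strict Implicit. Unset Printing Implicit Defensive.
Import Order.TTheory GRing.Theory Num.Theory.
Local Open Scope ring_scope.

Definition affp (R : rcfType) (a b c : R[i]) (z1 z2 : R[i]) : R[i] :=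
  a + b * z1 + c * z2.

Definition in_bidisk (R : rcfType) (z1 z2 : R[i]) : Prop :=
  `|z1| < 1 /\ `|z2| < 1.
Definition in_torus (R : rcfType) (z1 z2 : R[i]) : Prop :=
  `|z1| = 1 /\ `|z2| = 1.

(* Standard representation Theta = ptilde/p: p has no zeros on D^2. *)
Definition no_zeros_on_bidisk (R : rcfType) (p : R[i] -> R[i] -> R[i]) : Prop :=
  forall z1 z2, in_bidisk z1 z2 -> p z1 z2 != 0.

(* A zero (w1, w2) on the torus gives |a| = |b w1 + c w2| <= |b| + |c|.
   Conversely, if |b| + |c| > |a|, rotating z1 and z2 against the phases of
   b and c and scaling both by |a| / (|b| + |c|) < 1 produces a zero of
   a + b z1 + c z2 inside the bidisk. *)

From mathcomp Require Import all_boot all_order all_algebra.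
From mathcomp Require Import complex.
Import Order.TTheory GRing.Theory Num.Theory.
Local Open Scope ring_scope.

Section AffineZeros.

Variable C : numClosedFieldType.
Implicit Types a b c x : C.

Lemma mul_conj_div_norm x : x * (x^* / `|x|) = `|x|.
Proof.
rewrite mulrA -normCK; have [->|nz] := eqVneq `|x| 0; first by rewrite expr0n mul0r.
by rewrite expr2 mulfK.
Qed.

Lemma norm_conj_div_norm_le1 x : `|x^* / `|x| | <= 1.
Proof.
rewrite normrM normfV norm_conjC normr_id.
have [->|nz] := eqVneq `|x| 0; first by rewrite mul0r ler01.
by rewrite mulfV.
Qed.

Lemma affine_unimodular_root_norm_le {a b c z1 z2 : C} :
  `|z1| = 1 -> `|z2| = 1 -> a + b * z1 + c * z2 = 0 -> `|a| <= `|b| + `|c|.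
Proof.
move=> n1 n2 root; have -> : a = - (b * z1 + c * z2).
  by apply/eqP; rewrite -subr_eq0 opprK addrA root.
by rewrite normrN (le_trans (ler_normD _ _)) // !normrM n1 n2 !mulr1.
Qed.

Lemma affine_root_in_bidisk a b c :
  `|a| < `|b| + `|c| ->
  exists z1 z2 : C, [/\ `|z1| < 1, `|z2| < 1 & a + b * z1 + c * z2 = 0].
Proof.
set s := `|b| + `|c| => lt_as.
have s_gt0 : 0 < s by apply: le_lt_trans lt_as.
pose z x := - (a / s) * (x^* / `|x|).
have z_lt1 x : `|z x| < 1.
  rewrite normrM normrN normf_div (gtr0_norm s_gt0).
  have as_lt1 : `|a| / s < 1 by rewrite ltr_pdivrMr // mul1r.
  apply: le_lt_trans as_lt1.
  by rewrite ler_piMr ?norm_conj_div_norm_le1 // divr_ge0 // ltW.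
exists (z b), (z c); split => //.
rewrite /z !(mulrCA _ (- (a / s))) !mul_conj_div_norm -addrA -mulrDr mulNr.
by rewrite divfK ?subrr // gt_eqF.
Qed.

Lemma affine_torus_root_norm a b c :
  (forall z1 z2 : C, `|z1| < 1 -> `|z2| < 1 -> a + b * z1 + c * z2 != 0) ->
  (exists z1 z2 : C, [/\ `|z1| = 1, `|z2| = 1 & a + b * z1 + c * z2 = 0]) ->
  `|a| = `|b| + `|c|.
Proof.
move=> no_root [w1 [w2 [n1 n2 root]]].
apply/eqP; rewrite eq_le (affine_unimodular_root_norm_le n1 n2 root) /=.
rewrite real_leNgt ?realD ?normr_real //; apply/negP => /affine_root_in_bidisk.
case=> [z1 [z2 [lt1 lt2 root']]].
by move: (no_root z1 z2 lt1 lt2); rewrite root' eqxx.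
Qed.

End AffineZeros.

Theorem proposition5p3 (R : rcfType) (a b c : R[i]) :
  no_zeros_on_bidisk (affp a b c) ->
  (exists z1 z2 : R[i], in_torus z1 z2 /\ affp a b c z1 z2 = 0) ->
  `|a| = `|b| + `|c|.
Proof.
move=> no_root [w1 [w2 [[n1 n2] root]]].
apply: affine_torus_root_norm; last by exists w1, w2.
by move=> z1 z2 lt1 lt2; apply: no_root.
Qed.
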